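(* Let $V$ be a countably infinite set and $(V,E)$ a directed acyclic graph. Let $D\subseteq L^1(V)$ be the set of functions of the form $\operatorname{div}Q$ with $Q$ a finitely decomposable flow on $(V,E)$. Then $D$ is closed in the norm topology of $L^1(V)$.
   Context: A flow on $(V,E)$ is a map $Q:E\to[0,+\infty)$, with $\operatorname{div}Q(x)=\sum_{y:(x,y)\in E}Q(x,y)-\sum_{y:(y,x)\in E}Q(y,x)$. For a directed path $\gamma=(x_0,\dots,x_n)$, $Q_\gamma(x,y)=1$ if $(x,y)=(x_i,x_{i+1})$ for some $i$, $0$ otherwise. $Q$ is finitely decomposable if $Q=\sum_nq_nQ_{\gamma_n}$ pointwise for a countable family of finite self-avoiding directed paths $\gamma_n$ in $(V,E)$ and weights $q_n\ge0$ with $\sum_nq_n<\infty$; its divergence is then well defined and summable. *)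

From Stdlib Require Import Reals List ClassicalEpsilon.
From Coquelicot Require Import Coquelicot.
Import ListNotations.
Open Scope R_scope.
Set Implicit Arguments.

Section Defs.
Variable V : Type.

(* e : nat -> V is a bijection (V countably infinite). *)
Definition enumeration (e : nat -> V) : Prop :=
  (forall n m, e n = e m -> n = m) /\ (forall v, exists n, e n = v).

Definition ind (P : Prop) : R :=
  if excluded_middle_informative P then 1 else 0.

(* Sums over V are taken along the enumeration e; for absolutely summable
   functions (the only ones used) the value does not depend on e. *)
Definition L1 (e : nat -> V) (g : V -> R) : Prop :=
  ex_series (fun n => Rabs (g (e n))).

Definition L1norm (e : nat -> V) (g : V -> R) : R :=
  Series (fun n => Rabs (g (e n))).

Fixpoint dpath (E : V -> V -> Prop) (l : list V) : Prop :=
  match l with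
  | a :: ((b :: _) as t) => E a b /\ dpath E t
  | _ => True
  end.

Definition acyclic (E : V -> V -> Prop) : Prop :=
  forall (x : V) (l : list V), ~ dpath E (x :: l ++ [x]).

Definition sa_path (E : V -> V -> Prop) (l : list V) : Prop :=
  l <> [] /\ NoDup l /\ dpath E l.

Fixpoint edge_in (l : list V) (x y : V) : Prop :=
  match l with
  | a :: ((b :: _) as t) => (a = x /\ b = y) \/ edge_in t x y
  | _ => False
  end.

Definition Qpath (l : list V) (x y : V) : R := ind (edge_in l x y).

(* A flow: nonnegative function on edges (values off E are irrelevant). *)
Definition flow (E : V -> V -> Prop) (Q : V -> V -> R) : Prop :=
  forall x y, E x y -> 0 <= Q x y.

(* Q = sum_n q_n Q_{gamma_n} pointwise on E, with a countable family of
   finite self-avoiding directed paths, q_n >= 0, sum_n q_n < oo.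
   (A finite family is the special case where q_n = 0 eventually.) *)
Definition fin_decomposable (E : V -> V -> Prop) (Q : V -> V -> R) : Prop :=
  exists (gam : nat -> list V) (q : nat -> R),
    (forall n, sa_path E (gam n)) /\
    (forall n, 0 <= q n) /\ ex_series q /\
    (forall x y, E x y -> is_series (fun n => q n * Qpath (gam n) x y) (Q x y)).

Definition div (e : nat -> V) (E : V -> V -> Prop) (Q : V -> V -> R) (x : V) : R :=
  Series (fun n => ind (E x (e n)) * Q x (e n))
  - Series (fun n => ind (E (e n) x) * Q (e n) x).

Definition Dset (e : nat -> V) (E : V -> V -> Prop) (g : V -> R) : Prop :=
  exists Q, flow E Q /\ fin_decomposable E Q /\ forall x, g x = div e E Q x.

End Defs.

(* Write G i := g (e i). Every d in D is a sum of weighted paths, so that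
   d (x) = sum_n q_n (1[gamma_n starts at x] - 1[gamma_n ends at x]); truncating this sum
   approximates d in L^1 by the net outflow of a finitely supported plan p, where p i j > 0
   only if e j is reachable from e i. Reachability is transitive and, the graph being acyclic,
   irreflexive, so the mass passing through a vertex can be short-circuited until every vertex
   is a pure source or a pure sink. Then p i j is at most the column sum at j, hence at most
   |G j| + 1, and a diagonal argument yields a pointwise limit p of plans approximating g
   better and better. Column sums are dominated by G^- up to the L^1 error, so no mass escapes
   to infinity: the rows of p sum to G^+ and its columns to G^-. Sending p i j along a fixed
   path from e i to e j gives a finitely decomposable flow whose divergence is g. *)

From Stdlib Require Import Reals Lra Lia List Classical ClassicalEpsilon Cantor.
From Coquelicot Require Import Coquelicot.
Import ListNotations.
Open Scope R_scope.

(* [fsum f n] is [f 0 + ... + f (n - 1)]: unlike [sum_n] it has exactly [n] terms. *)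
Fixpoint fsum (f : nat -> R) (n : nat) : R :=
  match n with O => 0 | S m => fsum f m + f m end.

Lemma fsum_ext f g n : (forall k, (k < n)%nat -> f k = g k) -> fsum f n = fsum g n.
Proof. induction n as [|n IH]; intros H; simpl; [lra|]. rewrite H, IH; auto; lia. Qed.

Lemma fsum_plus f g n : fsum (fun k => f k + g k) n = fsum f n + fsum g n.
Proof. induction n; simpl; lra. Qed.

Lemma fsum_minus f g n : fsum (fun k => f k - g k) n = fsum f n - fsum g n.
Proof. induction n; simpl; lra. Qed.

Lemma fsum_scal c f n : fsum (fun k => c * f k) n = c * fsum f n.
Proof. induction n as [|n IH]; simpl; [ring|]. rewrite IH. ring. Qed.

Lemma fsum_0 n : fsum (fun _ => 0) n = 0.
Proof. induction n; simpl; lra. Qed.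

Lemma fsum_swap (F : nat -> nat -> R) n m :
  fsum (fun i => fsum (F i) m) n = fsum (fun j => fsum (fun i => F i j) n) m.
Proof. induction n as [|n IH]; simpl; [now rewrite fsum_0|]. now rewrite IH, <- fsum_plus. Qed.

Lemma fsum_le f g n : (forall k, (k < n)%nat -> f k <= g k) -> fsum f n <= fsum g n.
Proof.
  induction n as [|n IH]; intros H; simpl; [lra|].
  assert (f n <= g n) by (apply H; lia). assert (fsum f n <= fsum g n) by (apply IH; auto). lra.
Qed.

Lemma fsum_nonneg f n : (forall k, 0 <= f k) -> 0 <= fsum f n.
Proof. intros H. rewrite <- (fsum_0 n). apply fsum_le. auto. Qed.

Lemma fsum_le_mono f n m : (forall k, 0 <= f k) -> (n <= m)%nat -> fsum f n <= fsum f m.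
Proof. intros H Hnm. induction Hnm; simpl; [lra|]. specialize (H m). lra. Qed.

Lemma fsum_incr_le f g n m : (forall k, f k <= g k) -> (n <= m)%nat ->
  fsum f m - fsum f n <= fsum g m - fsum g n.
Proof. intros H Hnm. induction Hnm; simpl; [lra|]. specialize (H m). lra. Qed.

Lemma fsum_term_le f n k : (forall j, 0 <= f j) -> (k < n)%nat -> f k <= fsum f n.
Proof.
  intros H Hk. induction Hk; simpl.
  - pose proof (fsum_nonneg f k H). lra.
  - specialize (H m). lra.
Qed.

Lemma fsum_supp f M n : (forall k, (M <= k)%nat -> f k = 0) -> (M <= n)%nat -> fsum f n = fsum f M.
Proof. intros H Hn. induction Hn; simpl; [auto|]. rewrite H by lia. lra. Qed.

Lemma fsum_update f v a n : (v < n)%nat ->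
  fsum (fun k => if Nat.eq_dec k v then a else f k) n = fsum f n - f v + a.
Proof.
  induction n as [|n IH]; intros Hv; simpl; [lia|].
  destruct (Nat.eq_dec n v) as [->|Hn].
  - rewrite (fsum_ext _ f) by (intros k Hk; destruct (Nat.eq_dec k v); [lia|auto]). ring.
  - rewrite IH by lia. ring.
Qed.

Lemma fsum_single f v n : (forall k, k <> v -> f k = 0) -> (v < n)%nat -> fsum f n = f v.
Proof.
  intros H Hv. rewrite (fsum_ext f (fun k => if Nat.eq_dec k v then f v else 0)).
  - rewrite fsum_update, fsum_0 by auto. ring.
  - intros k _. destruct (Nat.eq_dec k v) as [->|Hk]; auto.
Qed.

Lemma fsum_neq_0 f n : fsum f n <> 0 -> exists k, (k < n)%nat /\ f k <> 0.
Proof.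
  intros H. apply NNPP. intros Hn. apply H. rewrite <- (fsum_0 n). apply fsum_ext.
  intros k Hk. apply NNPP. eauto.
Qed.

Lemma is_series_fsum f l : is_series f l <-> is_lim_seq (fsum f) l.
Proof.
  assert (Hs : forall n, fsum f (S n) = sum_n f n).
  { intros n. rewrite sum_n_Reals. induction n as [|n IH]; simpl in *; [lra|]. now rewrite IH. }
  rewrite (is_lim_seq_incr_1 (fsum f)). split; intros H.
  - apply (is_lim_seq_ext (sum_n f)); [intros; now rewrite Hs | exact H].
  - apply (is_lim_seq_ext _ (sum_n f)) in H; [exact H | intros; now rewrite Hs].
Qed.

Lemma is_lim_seq_fsum_Series f : ex_series f -> is_lim_seq (fsum f) (Series f).
Proof. intros H. apply is_series_fsum, Series_correct, H. Qed.

Lemma is_lim_seq_fsum (u : nat -> nat -> R) (a : nat -> R) N :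
  (forall n, (n < N)%nat -> is_lim_seq (u n) (a n)) ->
  is_lim_seq (fun m => fsum (fun n => u n m) N) (fsum a N).
Proof.
  induction N as [|N IH]; intros H; simpl; [apply is_lim_seq_const|].
  apply is_lim_seq_plus'; [apply IH; intros; apply H; lia | apply H; lia].
Qed.

Lemma is_lim_seq_le_R u v (a b : R) :
  (forall n, u n <= v n) -> is_lim_seq u a -> is_lim_seq v b -> a <= b.
Proof. intros H Hu Hv. exact (is_lim_seq_le u v a b H Hu Hv). Qed.

Lemma is_lim_seq_le_const u (a b : R) : (forall n, u n <= b) -> is_lim_seq u a -> a <= b.
Proof. intros H Hu. exact (is_lim_seq_le u (fun _ => b) a b H Hu (is_lim_seq_const b)). Qed.

Lemma is_lim_seq_ge_const u (a b : R) : (forall n, b <= u n) -> is_lim_seq u a -> b <= a.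
Proof. intros H Hu. exact (is_lim_seq_le (fun _ => b) u b a H (is_lim_seq_const b) Hu). Qed.

Lemma is_lim_seq_abs_sub_le u (a : R) b : is_lim_seq b 0 -> (forall n, Rabs (u n - a) <= b n) ->
  is_lim_seq u a.
Proof.
  intros Hb Hu. apply (is_lim_seq_le_le (fun n => a - b n) u (fun n => a + b n)).
  - intros n. specialize (Hu n). apply Rabs_le_between in Hu. lra.
  - replace (Finite a) with (Rbar_minus a 0) by (simpl; f_equal; ring).
    apply is_lim_seq_minus'; [apply is_lim_seq_const | exact Hb].
  - replace (Finite a) with (Rbar_plus a 0) by (simpl; f_equal; ring).
    apply is_lim_seq_plus'; [apply is_lim_seq_const | exact Hb].
Qed.

Lemma Series_nonneg f : (forall k, 0 <= f k) -> ex_series f -> 0 <= Series f.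
Proof.
  intros H Hs. apply (is_lim_seq_ge_const (fsum f)); [intros; apply fsum_nonneg; auto|].
  apply is_lim_seq_fsum_Series, Hs.
Qed.

Lemma fsum_le_Series f n : (forall k, 0 <= f k) -> ex_series f -> fsum f n <= Series f.
Proof.
  intros H Hs. apply (is_lim_seq_ge_const (fun m => fsum f (n + m))).
  - intros m. apply fsum_le_mono; auto; lia.
  - apply (is_lim_seq_subseq (fsum f) _ (fun m => (n + m)%nat));
      [|apply is_lim_seq_fsum_Series, Hs].
    apply eventually_subseq. intros; lia.
Qed.

Lemma term_le_Series f k : (forall j, 0 <= f j) -> ex_series f -> f k <= Series f.
Proof.
  intros H Hs. eapply Rle_trans; [apply (fsum_term_le f (S k))|apply fsum_le_Series]; auto.
Qed.

Lemma ex_series_nonneg_le f g : (forall k, 0 <= f k <= g k) -> ex_series g -> ex_series f.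
Proof.
  intros H Hg. apply (@ex_series_le R_AbsRing R_CompleteNormedModule f g); auto.
  intros n. change (Rabs (f n) <= g n). rewrite Rabs_pos_eq; apply H.
Qed.

Lemma ex_series_nonneg_bounded f B : (forall k, 0 <= f k) -> (forall n, fsum f n <= B) ->
  ex_series f /\ Series f <= B.
Proof.
  intros H HB. destruct (ex_finite_lim_seq_incr (fsum f) B) as [l Hl]; auto.
  { intros n. simpl. specialize (H n). lra. }
  apply is_series_fsum in Hl. rewrite (is_series_unique _ _ Hl). split; [now exists l|].
  apply (is_lim_seq_le_const (fsum f)); auto. now apply is_series_fsum.
Qed.

Lemma is_series_supp f M : (forall k, (M <= k)%nat -> f k = 0) -> is_series f (fsum f M).
Proof.
  intros H. apply is_series_fsum. apply is_lim_seq_incr_n with (N := M).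
  apply (is_lim_seq_ext (fun _ => fsum f M)); [|apply is_lim_seq_const].
  intros n. symmetry. apply fsum_supp; auto; lia.
Qed.

Lemma is_series_0 : is_series (fun _ => 0) 0.
Proof. change 0 with (fsum (fun _ => 0) 0) at 2. apply is_series_supp. auto. Qed.

Lemma Series_eq_0 f : (forall n, f n = 0) -> Series f = 0.
Proof.
  intros H. apply is_series_unique, (is_series_ext (fun _ => 0)); [auto|apply is_series_0].
Qed.

Lemma is_series_single f v : (forall k, k <> v -> f k = 0) -> is_series f (f v).
Proof.
  intros H. rewrite <- (fsum_single f v (S v)) by auto. apply is_series_supp.
  intros k Hk. apply H. lia.
Qed.

Definition tail_from (N : nat) (q : nat -> R) (n : nat) : R := if Nat.ltb n N then 0 else q n.

Lemma tail_from_bounds N q n : 0 <= q n -> 0 <= tail_from N q n <= q n.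
Proof. intros H. unfold tail_from. destruct (Nat.ltb n N); lra. Qed.

Lemma is_series_head N q f :
  is_series (fun n => (q n - tail_from N q n) * f n) (fsum (fun n => q n * f n) N).
Proof.
  rewrite (fsum_ext _ (fun n => (q n - tail_from N q n) * f n));
    [apply is_series_supp | ]; intros k Hk; unfold tail_from.
  - replace (Nat.ltb k N) with false by (symmetry; apply Nat.ltb_ge; auto). ring.
  - replace (Nat.ltb k N) with true by (symmetry; apply Nat.ltb_lt; auto). ring.
Qed.

Lemma Series_tail_from N q : ex_series q -> Series (tail_from N q) = Series q - fsum q N.
Proof.
  intros Hq. pose proof (is_series_head N q (fun _ => 1)) as H1.
  rewrite (fsum_ext _ q) in H1 by (intros; ring).
  rewrite <- (is_series_unique _ _ H1), <- Series_minus; [|auto|exact (ex_intro _ _ H1)].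
  apply Series_ext. intros; ring.
Qed.

Lemma Series_tail_small q eps : ex_series q -> 0 < eps -> exists N, Series q - fsum q N < eps.
Proof.
  intros Hq Heps.
  destruct (proj2 (is_lim_seq_spec _ _) (is_lim_seq_fsum_Series q Hq) (mkposreal _ Heps)) as [N HN].
  exists N. specialize (HN N (le_n N)). simpl in HN. apply Rabs_lt_between' in HN. lra.
Qed.

Lemma is_series_mult_l c f l : is_series f l -> is_series (fun n => c * f n) (c * l).
Proof. apply (@is_series_scal_l R_AbsRing R_NormedModule). Qed.

Lemma is_series_add f g a b :
  is_series f a -> is_series g b -> is_series (fun n => f n + g n) (a + b).
Proof. apply (@is_series_plus R_AbsRing R_NormedModule). Qed.

Lemma is_series_sub f g a b :
  is_series f a -> is_series g b -> is_series (fun n => f n - g n) (a - b).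
Proof. apply (@is_series_minus R_AbsRing R_NormedModule). Qed.

Lemma is_series_swap (F : nat -> nat -> R) (a : nat -> R) :
  (forall n j, 0 <= F n j) -> (forall n, is_series (F n) (a n)) -> ex_series a ->
  (forall j, ex_series (fun n => F n j)) /\
  is_series (fun j => Series (fun n => F n j)) (Series a).
Proof.
  intros Hpos Hs Ha.
  assert (Hex : forall n, ex_series (F n)) by (intro n; exists (a n); auto).
  assert (HaS : forall n, Series (F n) = a n) by (intro n; apply is_series_unique; auto).
  assert (Hj : forall j, ex_series (fun n => F n j)).
  { intro j. apply ex_series_nonneg_le with (g := a); auto. intro n. split; auto.
    rewrite <- HaS. apply term_le_Series; auto. }
  split; auto.
  set (b := fun j => Series (fun n => F n j)).
  assert (Hbpos : forall j, 0 <= b j) by (intro; apply Series_nonneg; auto).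
  assert (Hb : forall J, fsum b J <= Series a).
  { intro J. apply (is_lim_seq_le_R (fun N => fsum (fun j => fsum (fun n => F n j) N) J) (fsum a));
      [| apply is_lim_seq_fsum; intros; apply is_lim_seq_fsum_Series; auto
       | apply is_lim_seq_fsum_Series; auto].
    intros N. rewrite <- fsum_swap. apply fsum_le. intros n _. rewrite <- HaS.
    apply fsum_le_Series; auto. }
  destruct (ex_series_nonneg_bounded b (Series a) Hbpos Hb) as [Hbex Hble].
  assert (Hge : Series a <= Series b).
  { apply (is_lim_seq_le_const (fsum a)); [|apply is_lim_seq_fsum_Series; auto].
    intros N. apply (is_lim_seq_le_const (fun J => fsum (fun n => fsum (F n) J) N));
      [| apply is_lim_seq_fsum; intros; rewrite <- HaS; apply is_lim_seq_fsum_Series; auto].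
    intros J. rewrite fsum_swap. eapply Rle_trans; [|apply (fsum_le_Series b J); auto].
    apply fsum_le. intros j _. apply fsum_le_Series; auto. }
  replace (Series a) with (Series b) by lra. apply Series_correct. auto.
Qed.

Lemma ind_true (P : Prop) : P -> ind P = 1.
Proof. intros H. unfold ind. destruct (excluded_middle_informative P); tauto. Qed.

Lemma ind_false (P : Prop) : ~ P -> ind P = 0.
Proof. intros H. unfold ind. destruct (excluded_middle_informative P); tauto. Qed.

Lemma ind_bounds (P : Prop) : 0 <= ind P <= 1.
Proof. unfold ind. destruct (excluded_middle_informative P); lra. Qed.

Lemma mul_ind_bounds c (P : Prop) : 0 <= c -> 0 <= c * ind P <= c.
Proof. intros Hc. pose proof (ind_bounds P). split; nra. Qed.

Lemma ind_iff (P Q : Prop) : (P <-> Q) -> ind P = ind Q.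
Proof.
  intros H. unfold ind.
  destruct (excluded_middle_informative P), (excluded_middle_informative Q); tauto.
Qed.

Lemma ind_or (P Q : Prop) : ~ (P /\ Q) -> ind (P \/ Q) = ind P + ind Q.
Proof.
  intros H. unfold ind. destruct (excluded_middle_informative (P \/ Q)),
    (excluded_middle_informative P), (excluded_middle_informative Q); try tauto; lra.
Qed.

Lemma is_series_ind_unique (V : Type) (e : nat -> V) (P : V -> Prop) : enumeration e ->
  (forall y y', P y -> P y' -> y = y') ->
  is_series (fun j => ind (P (e j))) (ind (exists y, P y)).
Proof.
  intros [Hinj Hsur] HP. destruct (classic (exists y, P y)) as [[y Hy]|Hn].
  - destruct (Hsur y) as [j Hj]. subst y.
    rewrite (ind_true (exists y, P y)), <- (ind_true (P (e j))) by eauto.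
    apply (is_series_single (fun k => ind (P (e k)))). intros k Hk. apply ind_false.
    intros Hk'. apply Hk, Hinj, HP; auto.
  - rewrite ind_false by auto. apply (is_series_ext (fun _ => 0)); [|apply is_series_0].
    intros k. symmetry. apply ind_false. eauto.
Qed.

Lemma enumeration_id : enumeration (fun n : nat => n).
Proof. split; eauto. Qed.

Lemma is_series_reindex (f : nat -> R) (s : nat -> nat) l :
  (forall n, 0 <= f n) -> (forall a b, s a = s b -> a = b) ->
  (forall n, (forall j, s j <> n) -> f n = 0) ->
  is_series (fun j => f (s j)) l -> is_series f l.
Proof.
  intros Hf Hinj Hout Hs.
  destruct (is_series_swap (fun j n => f n * ind (s j = n)) (fun j => f (s j))) as [_ HF].
  - intros j n. pose proof (mul_ind_bounds (f n) (s j = n) (Hf n)). lra.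
  - intros j. rewrite <- (Rmult_1_r (f (s j))), <- (ind_true (s j = s j)) by auto.
    apply (is_series_single (fun n => f n * ind (s j = n))).
    intros k Hk. rewrite ind_false by congruence. ring.
  - now exists l.
  - rewrite (is_series_unique _ _ Hs) in HF. eapply is_series_ext; [|exact HF].
    intros n. simpl.
    assert (Hu : is_series (fun j => f n * ind (s j = n)) (f n * ind (exists j, s j = n))).
    { apply is_series_mult_l, (is_series_ind_unique nat (fun j => j) (fun j => s j = n)).
      apply enumeration_id. intros; apply Hinj; congruence. }
    rewrite (is_series_unique _ _ Hu).
    destruct (classic (exists j, s j = n)) as [Hx|Hx].
    + rewrite ind_true by auto. ring.
    + rewrite ind_false, Hout by eauto. ring.
Qed.

Lemma hd_indep {A} (l : list A) x z : l <> [] -> hd x l = hd z l.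
Proof. destruct l; simpl; congruence. Qed.

Lemma last_indep {A} (l : list A) x z : l <> [] -> last l x = last l z.
Proof.
  induction l as [|a [|b t] IH]; intros H; [congruence|reflexivity|].
  apply IH. discriminate.
Qed.

Section Edges.
Context {V : Type}.
Implicit Types (l t : list V) (x y a b : V).

Lemma edge_in_fst l x y : edge_in l x y -> In x l.
Proof. induction l as [|a [|b t] IH]; simpl; tauto. Qed.

Lemma edge_in_snd a t x y : edge_in (a :: t) x y -> In y t.
Proof.
  revert a. induction t as [|b t IH]; intros a; simpl; [tauto|].
  intros [[-> ->]|H]; [now left | right; eapply IH; eauto].
Qed.

Lemma edge_in_succ_unique l x y y' : NoDup l -> edge_in l x y -> edge_in l x y' -> y = y'.
Proof.
  induction l as [|a [|b t] IH]; simpl; try tauto.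
  intros Hnd H1 H2. inversion Hnd as [|? ? Ha Hnd']; subst.
  destruct H1 as [[-> ->]|H1], H2 as [[Hx ->]|H2]; subst; auto;
    exfalso; apply Ha; eapply edge_in_fst; eauto.
Qed.

Lemma edge_in_pred_unique l x x' y : NoDup l -> edge_in l x y -> edge_in l x' y -> x = x'.
Proof.
  induction l as [|a [|b t] IH]; simpl; try tauto.
  intros Hnd H1 H2. inversion Hnd as [|? ? _ Hnd']; subst.
  inversion Hnd' as [|? ? Hb _]; subst.
  destruct H1 as [[-> ->]|H1], H2 as [[Hx Hy]|H2]; subst; auto;
    exfalso; apply Hb; eapply edge_in_snd; eauto.
Qed.

(* A path leaves every vertex once and enters it once, except at its two ends. *)
Lemma edge_in_out_sub_in l x : NoDup l -> l <> nil ->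
  ind (exists y, edge_in l x y) - ind (exists y, edge_in l y x)
  = ind (hd x l = x) - ind (last l x = x).
Proof.
  induction l as [|a [|b t] IH]; intros Hnd Hne; [congruence| |].
  - simpl. rewrite !ind_false by (intros [y Hy]; auto). lra.
  - inversion Hnd as [|? ? Ha Hnd']; subst. inversion Hnd' as [|? ? Hb _]; subst.
    assert (Hout : ind (exists y, edge_in (a :: b :: t) x y)
                   = ind (a = x) + ind (exists y, edge_in (b :: t) x y)).
    { rewrite <- ind_or; [apply ind_iff; simpl; split|].
      - intros [y [[-> ->]|H]]; eauto.
      - intros [->|[y H]]; eauto.
      - intros [-> [y H]]. apply Ha. eapply edge_in_fst; eauto. }
    assert (Hin : ind (exists y, edge_in (a :: b :: t) y x)
                  = ind (b = x) + ind (exists y, edge_in (b :: t) y x)).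
    { rewrite <- ind_or; [apply ind_iff; simpl; split|].
      - intros [y [[-> ->]|H]]; eauto.
      - intros [->|[y H]]; eauto.
      - intros [-> [y H]]. apply Hb. eapply edge_in_snd; eauto. }
    rewrite Hout, Hin. specialize (IH Hnd' ltac:(congruence)). simpl in IH |- *. lra.
Qed.

End Edges.

Section Paths.
Context {V : Type}.
Variable E : V -> V -> Prop.
Implicit Types (l t : list V) (x y a b c : V).

Lemma edge_in_E l x y : dpath E l -> edge_in l x y -> E x y.
Proof.
  induction l as [|a [|b t] IH]; simpl; try tauto.
  intros [Hab Hd] [[-> ->]|H]; auto.
Qed.

Lemma dpath_app_l l1 l2 : dpath E (l1 ++ l2) -> dpath E l1.
Proof.
  induction l1 as [|a [|b t] IH]; simpl; auto.
  intros [H1 H2]. split; auto. apply IH. auto.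
Qed.

Lemma dpath_cons a l : dpath E (a :: l) -> dpath E l.
Proof. destruct l; simpl; tauto. Qed.

Lemma dpath_join l1 b l2 : dpath E (l1 ++ [b]) -> dpath E (b :: l2) -> dpath E (l1 ++ b :: l2).
Proof.
  induction l1 as [|a [|c t] IH]; simpl; auto.
  - intros [H1 _] H2. split; auto.
  - intros [H1 H2] H3. split; auto. apply IH; auto.
Qed.

Lemma acyclic_dpath_NoDup l : acyclic E -> dpath E l -> NoDup l.
Proof.
  intros Hac. induction l as [|a t IH]; intros Hd; constructor.
  - intros Hin. apply in_split in Hin. destruct Hin as [l1 [l2 ->]].
    apply (Hac a l1). apply (dpath_app_l _ l2). simpl in Hd |- *.
    rewrite <- app_assoc. exact Hd.
  - apply IH. eapply dpath_cons; eauto.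
Qed.

Definition reach a b := exists l, dpath E (a :: l ++ [b]).

Lemma reach_trans a b c : reach a b -> reach b c -> reach a c.
Proof.
  intros [l1 H1] [l2 H2]. exists (l1 ++ b :: l2).
  change (dpath E ((a :: l1 ++ b :: l2) ++ [c])).
  replace ((a :: l1 ++ b :: l2) ++ [c]) with ((a :: l1) ++ b :: (l2 ++ [c]))
    by (simpl; now rewrite <- app_assoc).
  now apply dpath_join.
Qed.

Lemma acyclic_not_reach a : acyclic E -> ~ reach a a.
Proof. intros Hac [l Hl]. exact (Hac a l Hl). Qed.

Lemma sa_path_reach l z : sa_path E l -> hd z l <> last l z -> reach (hd z l) (last l z).
Proof.
  intros [Hne [_ Hd]] Hdiff. destruct l as [|a [|c t]]; [congruence|simpl in Hdiff; congruence|].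
  destruct (exists_last (l := c :: t) ltac:(congruence)) as [l' [b Hb]].
  simpl hd. rewrite Hb in Hd |- *. exists l'.
  change (a :: l' ++ [b]) with ((a :: l') ++ [b]) in Hd |- *. now rewrite last_last.
Qed.

End Paths.

Section Divergence.
Variable V : Type.
Variable E : V -> V -> Prop.
Variable e : nat -> V.
Hypothesis He : enumeration e.

Lemma Series_incident (F : V -> Prop) (P : nat -> V -> Prop) (q : nat -> R) (Qx : V -> R) :
  (forall n, 0 <= q n) -> ex_series q ->
  (forall n y y', P n y -> P n y' -> y = y') -> (forall n y, P n y -> F y) ->
  (forall y, F y -> is_series (fun n => q n * ind (P n y)) (Qx y)) ->
  Series (fun j => ind (F (e j)) * Qx (e j)) = Series (fun n => q n * ind (exists y, P n y)).
Proof.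
  intros Hq Hqs Huniq HPF HQ.
  destruct (is_series_swap (fun n j => q n * ind (P n (e j)))
                           (fun n => q n * ind (exists y, P n y)))
    as [_ Hsw].
  - intros n j. apply mul_ind_bounds, Hq.
  - intros n. apply is_series_mult_l, is_series_ind_unique; [exact He | apply Huniq].
  - apply (ex_series_nonneg_le _ q); auto. intros n. apply mul_ind_bounds, Hq.
  - rewrite <- (is_series_unique _ _ Hsw). apply Series_ext. intros j.
    destruct (classic (F (e j))) as [HF|HF].
    + rewrite ind_true, Rmult_1_l by auto. symmetry. apply is_series_unique, HQ, HF.
    + rewrite ind_false, Rmult_0_l by auto. symmetry. apply Series_eq_0.
      intros n. rewrite ind_false by eauto. ring.
Qed.

Lemma is_series_div (gam : nat -> list V) (q : nat -> R) (Q : V -> V -> R) :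
  (forall n, sa_path E (gam n)) -> (forall n, 0 <= q n) -> ex_series q ->
  (forall x y, E x y -> is_series (fun n => q n * Qpath (gam n) x y) (Q x y)) ->
  forall x, is_series (fun n => q n * (ind (hd x (gam n) = x) - ind (last (gam n) x = x)))
                      (div e E Q x).
Proof.
  intros Hsa Hq Hqs HQ x.
  assert (Hbd : forall n (P : Prop), 0 <= q n * ind P <= q n) by (intros; apply mul_ind_bounds, Hq).
  assert (Hex : forall P : nat -> Prop, ex_series (fun n => q n * ind (P n)))
    by (intros P; apply (ex_series_nonneg_le _ q); auto).
  assert (Hsucc : forall n y y', edge_in (gam n) x y -> edge_in (gam n) x y' -> y = y')
    by (intros n y y'; apply (edge_in_succ_unique (gam n) x y y'), (Hsa n)).
  assert (Hpred : forall n y y', edge_in (gam n) y x -> edge_in (gam n) y' x -> y = y')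
    by (intros n y y'; apply (edge_in_pred_unique (gam n) y y' x), (Hsa n)).
  assert (HE : forall n y z, edge_in (gam n) y z -> E y z)
    by (intros n y z; apply edge_in_E, (Hsa n)).
  unfold div.
  rewrite (Series_incident (E x) (fun n y => edge_in (gam n) x y) q (Q x) Hq Hqs Hsucc
             (fun n => HE n x) (fun y => HQ x y)),
          (Series_incident (fun y => E y x) (fun n y => edge_in (gam n) y x) q (fun y => Q y x)
             Hq Hqs Hpred (fun n y => HE n y x) (fun y => HQ y x)).
  rewrite <- Series_minus by apply Hex.
  apply (is_series_ext (fun n => q n * ind (exists y, edge_in (gam n) x y)
                                - q n * ind (exists y, edge_in (gam n) y x))).
  - intros n. destruct (Hsa n) as [Hne [Hnd _]].
    rewrite <- Rmult_minus_distr_l, edge_in_out_sub_in; auto.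
  - apply Series_correct, (ex_series_minus _ _ (Hex _) (Hex _)).
Qed.

End Divergence.

Definition row (p : nat -> nat -> R) M i := fsum (p i) M.
Definition col (p : nat -> nat -> R) M j := fsum (fun i => p i j) M.
Definition net p M i := row p M i - col p M i.

Definition L1_close (G H : nat -> R) (eps : R) : Prop :=
  ex_series (fun i => Rabs (G i - H i)) /\ Series (fun i => Rabs (G i - H i)) < eps.

Lemma L1_close_trans G H K a b : L1_close G H a -> L1_close H K b -> L1_close G K (a + b).
Proof.
  intros [HexGH HGH] [HexHK HHK].
  assert (Hle : forall i, 0 <= Rabs (G i - K i) <= Rabs (G i - H i) + Rabs (H i - K i)).
  { intros i. split; [apply Rabs_pos|].
    replace (G i - K i) with ((G i - H i) + (H i - K i)) by ring. apply Rabs_triang. }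
  assert (Hex : ex_series (fun i => Rabs (G i - H i) + Rabs (H i - K i)))
    by (apply (ex_series_plus (fun i => Rabs (G i - H i))); auto).
  split; [exact (ex_series_nonneg_le _ _ Hle Hex)|].
  eapply Rle_lt_trans; [apply (Series_le _ _ Hle Hex)|]. rewrite Series_plus by auto. lra.
Qed.

Lemma bounded_prefix (f : nat -> nat) N : exists M, forall n, (n < N)%nat -> (f n < M)%nat.
Proof.
  induction N as [|N [M HM]]; [exists O; lia|].
  exists (S (M + f N)). intros n Hn. destruct (Nat.eq_dec n N) as [->|Hne]; [lia|].
  specialize (HM n ltac:(lia)). lia.
Qed.

Definition endpoint_plan (q : nat -> R) (a b : nat -> nat) N (i j : nat) : R :=
  fsum (fun n => q n * ind (a n = i /\ b n = j /\ i <> j)) N.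

Section Plans.
Variable Rl : nat -> nat -> Prop.

(* [p i j] is the mass carried from [i] to [j]. *)
Definition plan (p : nat -> nat -> R) (M : nat) : Prop :=
  (forall i j, 0 <= p i j) /\ (forall i j, p i j <> 0 -> Rl i j) /\
  (forall i j, (M <= i \/ M <= j)%nat -> p i j = 0).

Lemma net_endpoint_plan (q : nat -> R) (a b : nat -> nat) N M :
  (forall n, (n < N)%nat -> (a n < M)%nat /\ (b n < M)%nat) ->
  forall i, net (endpoint_plan q a b N) M i
            = fsum (fun n => q n * (ind (a n = i) - ind (b n = i))) N.
Proof.
  intros HM i. unfold net, row, col, endpoint_plan. rewrite (fsum_swap _ M N), (fsum_swap _ M N).
  rewrite <- fsum_minus. apply fsum_ext. intros n Hn. rewrite !fsum_scal, <- Rmult_minus_distr_l.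
  f_equal. destruct (HM n Hn) as [Ha Hb].
  rewrite (fsum_single _ (b n)), (fsum_single _ (a n)) by
    (auto; intros k Hk; apply ind_false; intros (? & ? & ?); congruence).
  destruct (Nat.eq_dec (a n) i), (Nat.eq_dec (b n) i);
    repeat ((rewrite ind_true by (repeat split; congruence))
            || (rewrite ind_false by (let H := fresh in intro H; decompose [and] H; congruence)));
    ring.
Qed.

Lemma endpoint_tail_bound (r : nat -> R) (a b : nat -> nat) : (forall n, 0 <= r n) -> ex_series r ->
  ex_series (fun i => Rabs (Series (fun n => r n * (ind (a n = i) - ind (b n = i))))) /\
  Series (fun i => Rabs (Series (fun n => r n * (ind (a n = i) - ind (b n = i))))) <= 2 * Series r.
Proof.
  intros Hr Hrs.
  set (F := fun n i => r n * (ind (a n = i) + ind (b n = i))).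
  assert (HF0 : forall n i, 0 <= F n i).
  { intros n i. pose proof (ind_bounds (a n = i)). pose proof (ind_bounds (b n = i)).
    specialize (Hr n). unfold F. nra. }
  assert (Hone : forall k : nat, is_series (fun i => ind (k = i)) 1).
  { intros k. rewrite <- (ind_true (exists i, k = i)) by eauto.
    apply (is_series_ind_unique nat (fun i => i) (fun i => k = i));
      [apply enumeration_id|congruence]. }
  destruct (is_series_swap F (fun n => 2 * r n)) as [HFi HFs]; auto.
  { intros n. replace (2 * r n) with (r n * (1 + 1)) by ring. apply is_series_mult_l.
    exact (is_series_add _ _ _ _ (Hone (a n)) (Hone (b n))). }
  { apply (ex_series_scal_l 2 r), Hrs. }
  rewrite Series_scal_l in HFs.
  assert (Hpt : forall i, 0 <= Rabs (Series (fun n => r n * (ind (a n = i) - ind (b n = i))))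
                            <= Series (fun n => F n i)).
  { intros i. split; [apply Rabs_pos|].
    assert (Hle : forall n, 0 <= Rabs (r n * (ind (a n = i) - ind (b n = i))) <= F n i).
    { intros n. split; [apply Rabs_pos|]. unfold F. rewrite Rabs_mult, Rabs_pos_eq by auto.
      apply Rmult_le_compat_l; [auto|]. pose proof (ind_bounds (a n = i)).
      pose proof (ind_bounds (b n = i)). apply Rabs_le. lra. }
    eapply Rle_trans; [apply Series_Rabs, (ex_series_nonneg_le _ _ Hle (HFi i))|].
    apply Series_le; auto. }
  split; [exact (ex_series_nonneg_le _ _ Hpt (ex_intro _ _ HFs))|].
  rewrite <- (is_series_unique _ _ HFs). apply Series_le; [exact Hpt | exact (ex_intro _ _ HFs)].
Qed.

Lemma endpoint_plan_is_plan (q : nat -> R) (a b : nat -> nat) N M :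
  (forall n, 0 <= q n) -> (forall n, a n <> b n -> Rl (a n) (b n)) ->
  (forall n, (n < N)%nat -> (a n < M)%nat /\ (b n < M)%nat) ->
  plan (endpoint_plan q a b N) M.
Proof.
  intros Hq HRl HabM. unfold endpoint_plan. split; [|split].
  - intros i j. apply fsum_nonneg. intros n. apply mul_ind_bounds, Hq.
  - intros i j Hp. destruct (fsum_neq_0 _ _ Hp) as [n [_ Hn]].
    destruct (classic (a n = i /\ b n = j /\ i <> j)) as [(<- & <- & Hab)|Hc]; [auto|].
    rewrite ind_false in Hn by auto. lra.
  - intros i j Hij. rewrite <- (fsum_0 N). apply fsum_ext. intros n Hn.
    specialize (HabM n Hn). rewrite ind_false; [ring|lia].
Qed.

Lemma endpoint_plan_approx (q : nat -> R) (a b : nat -> nat) (G : nat -> R) eps :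
  (forall n, 0 <= q n) -> ex_series q -> (forall n, a n <> b n -> Rl (a n) (b n)) ->
  (forall i, is_series (fun n => q n * (ind (a n = i) - ind (b n = i))) (G i)) -> 0 < eps ->
  exists p M, plan p M /\ L1_close G (net p M) eps.
Proof.
  intros Hq Hqs HRl HG Heps.
  destruct (Series_tail_small q (eps / 2) Hqs ltac:(lra)) as [N HN].
  set (r := tail_from N q).
  assert (Hr : forall n, 0 <= r n <= q n) by (intros n; apply tail_from_bounds, Hq).
  assert (Hrs : ex_series r) by exact (ex_series_nonneg_le _ _ Hr Hqs).
  destruct (bounded_prefix (fun n => Nat.max (a n) (b n)) N) as [M HM].
  assert (HabM : forall n, (n < N)%nat -> (a n < M)%nat /\ (b n < M)%nat)
    by (intros n Hn; specialize (HM n Hn); lia).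
  exists (endpoint_plan q a b N), M. split; [apply endpoint_plan_is_plan; auto|].
  assert (Hdiff : forall i, G i - net (endpoint_plan q a b N) M i
                            = Series (fun n => r n * (ind (a n = i) - ind (b n = i)))).
  { intros i. rewrite net_endpoint_plan by auto. symmetry. apply is_series_unique.
    apply (is_series_ext (fun n => q n * (ind (a n = i) - ind (b n = i))
                                 - (q n - r n) * (ind (a n = i) - ind (b n = i))));
      [intros n; simpl; ring | apply is_series_sub; [apply HG | apply is_series_head]]. }
  destruct (endpoint_tail_bound r a b (fun n => proj1 (Hr n)) Hrs) as [Hex Hle].
  replace (Series r) with (Series q - fsum q N) in Hle by (symmetry; apply Series_tail_from, Hqs).
  split.
  - eapply ex_series_ext; [|exact Hex]. intros i. now rewrite Hdiff.
  - rewrite (Series_ext _ _ (fun i => f_equal Rabs (Hdiff i))). lra.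
Qed.

End Plans.

Lemma Rdiv_nonneg x m : 0 <= x -> 0 <= m -> 0 <= x / m.
Proof.
  intros Hx Hm. destruct (Req_dec m 0) as [->|Hz]; [unfold Rdiv; rewrite Rinv_0; lra|].
  apply Rmult_le_pos; [auto|left; apply Rinv_0_lt_compat; lra].
Qed.

Lemma div_Rmax_bounds a b : 0 <= a -> 0 <= b -> 0 <= a / Rmax a b <= 1.
Proof.
  intros Ha Hb. split; [apply Rdiv_nonneg; [auto|pose proof (Rmax_l a b); lra]|].
  destruct (Req_dec (Rmax a b) 0) as [Hz|Hz]; [rewrite Hz; unfold Rdiv; rewrite Rinv_0; lra|].
  assert (0 < Rmax a b) by (pose proof (Rmax_l a b); lra).
  unfold Rdiv. rewrite <- (Rinv_r (Rmax a b)) by lra.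
  apply Rmult_le_compat_r; [left; apply Rinv_0_lt_compat; lra | apply Rmax_l].
Qed.

Definition separated (p : nat -> nat -> R) M : Prop := forall u, row p M u = 0 \/ col p M u = 0.

Section Rerouting.
Variable Rl : nat -> nat -> Prop.
Hypothesis Rl_irrefl : forall i, ~ Rl i i.
Hypothesis Rl_trans : forall i j k, Rl i j -> Rl j k -> Rl i k.

(* With inflow [I] and outflow [O] at [v] and [m = max I O], the pair [i, j] receives
   [p i v * p v j / m] directly; this empties whichever side of [v] is smaller.
   If [m = 0] then [/ 0 = 0] and nothing changes. *)
Definition reroute (p : nat -> nat -> R) M v i j : R :=
  let I := col p M v in let O := row p M v in let m := Rmax I O in
  if Nat.eq_dec i v then (if Nat.eq_dec j v then 0 else p v j * (1 - I / m))
  else if Nat.eq_dec j v then p i v * (1 - O / m)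
  else p i j + p i v * p v j / m.

Lemma plan_diag_0 p M v : plan Rl p M -> p v v = 0.
Proof. intros [_ [H _]]. apply NNPP. intros Hv. exact (Rl_irrefl v (H v v Hv)). Qed.

Section Reroute.
Variables (p : nat -> nat -> R) (M v : nat).
Hypothesis Hp : plan Rl p M.
Hypothesis Hv : (v < M)%nat.

Let I := col p M v.
Let O := row p M v.
Let m := Rmax I O.

Lemma in_out_nonneg : 0 <= I /\ 0 <= O.
Proof. destruct Hp as [Hpos _]. split; apply fsum_nonneg; auto. Qed.

Lemma ratios_bounds : 0 <= m /\ 0 <= I / m <= 1 /\ 0 <= O / m <= 1.
Proof.
  destruct in_out_nonneg. unfold m. split; [pose proof (Rmax_l I O); lra|].
  split; [apply div_Rmax_bounds; auto|]. rewrite Rmax_comm. apply div_Rmax_bounds; auto.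
Qed.

Lemma reroute_plan : plan Rl (reroute p M v) M.
Proof.
  destruct ratios_bounds as [Hm [HI HO]]. destruct Hp as [Hpos [HRl Hsupp]].
  unfold reroute; fold I O m. split; [|split].
  - intros i j. destruct (Nat.eq_dec i v), (Nat.eq_dec j v); try lra.
    + pose proof (Hpos v j). nra.
    + pose proof (Hpos i v). nra.
    + pose proof (Hpos i j). pose proof (Hpos i v). pose proof (Hpos v j).
      assert (0 <= p i v * p v j / m) by (apply Rdiv_nonneg; [apply Rmult_le_pos|]; auto). lra.
  - intros i j Hne. destruct (Nat.eq_dec i v) as [->|Hi], (Nat.eq_dec j v) as [->|Hj].
    + lra.
    + apply HRl. intros Hz. rewrite Hz in Hne. lra.
    + apply HRl. intros Hz. rewrite Hz in Hne. lra.
    + destruct (Req_dec (p i j) 0) as [Hz|Hz]; [|auto].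
      destruct (Req_dec (p i v) 0) as [Hz1|Hz1]; [rewrite Hz, Hz1 in Hne; unfold Rdiv in Hne; lra|].
      destruct (Req_dec (p v j) 0) as [Hz2|Hz2]; [rewrite Hz, Hz2 in Hne; unfold Rdiv in Hne; lra|].
      eauto.
  - intros i j Hij. destruct (Nat.eq_dec i v) as [->|Hi], (Nat.eq_dec j v) as [->|Hj].
    + lia.
    + rewrite (Hsupp v j) by lia. ring.
    + rewrite (Hsupp i v) by lia. ring.
    + rewrite (Hsupp i j) by auto. destruct Hij.
      * rewrite (Hsupp i v) by lia. unfold Rdiv. ring.
      * rewrite (Hsupp v j) by lia. unfold Rdiv. ring.
Qed.

Lemma row_reroute u : u <> v -> row (reroute p M v) M u = row p M u.
Proof.
  intros Hu. pose proof (plan_diag_0 p M v Hp) as Hvv. unfold row, reroute. fold I O m.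
  destruct (Nat.eq_dec u v) as [|_]; [contradiction|].
  rewrite (fsum_update (fun j => p u j + p u v * p v j / m)) by auto.
  rewrite fsum_plus, (fsum_ext (fun j => p u v * p v j / m) (fun j => p u v / m * p v j)), fsum_scal
    by (intros; unfold Rdiv; ring).
  change (fsum (p v) M) with O.
  rewrite Hvv. unfold Rdiv. ring.
Qed.

Lemma col_reroute u : u <> v -> col (reroute p M v) M u = col p M u.
Proof.
  intros Hu. pose proof (plan_diag_0 p M v Hp) as Hvv. unfold col, reroute. fold I O m.
  rewrite (fsum_ext _ (fun i => if Nat.eq_dec i v then p v u * (1 - I / m)
                               else p i u + p i v * p v u / m)).
  2: { intros i _. destruct (Nat.eq_dec i v), (Nat.eq_dec u v); easy. }
  rewrite (fsum_update (fun i => p i u + p i v * p v u / m)) by auto.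
  rewrite fsum_plus, (fsum_ext (fun i => p i v * p v u / m) (fun i => p v u / m * p i v)), fsum_scal
    by (intros; unfold Rdiv; ring).
  change (fsum (fun i => p i v) M) with I. rewrite Hvv. unfold Rdiv. ring.
Qed.

Lemma row_reroute_self : row (reroute p M v) M v = O * (1 - I / m).
Proof.
  pose proof (plan_diag_0 p M v Hp) as Hvv. unfold row, reroute. fold I O m.
  destruct (Nat.eq_dec v v) as [_|]; [|contradiction].
  rewrite (fsum_update (fun j => p v j * (1 - I / m))),
    (fsum_ext (fun j => p v j * (1 - I / m)) (fun j => (1 - I / m) * p v j)), fsum_scal
    by (auto; intros; ring).
  change (fsum (p v) M) with O. rewrite Hvv. ring.
Qed.

Lemma col_reroute_self : col (reroute p M v) M v = I * (1 - O / m).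
Proof.
  pose proof (plan_diag_0 p M v Hp) as Hvv. unfold col, reroute. fold I O m.
  rewrite (fsum_ext _ (fun i => if Nat.eq_dec i v then 0 else p i v * (1 - O / m))).
  2: { intros i _. destruct (Nat.eq_dec i v), (Nat.eq_dec v v); easy. }
  rewrite (fsum_update (fun i => p i v * (1 - O / m))),
    (fsum_ext (fun i => p i v * (1 - O / m)) (fun i => (1 - O / m) * p i v)), fsum_scal
    by (auto; intros; ring).
  change (fsum (fun i => p i v) M) with I. rewrite Hvv. ring.
Qed.

Lemma reroute_separates : row (reroute p M v) M v = 0 \/ col (reroute p M v) M v = 0.
Proof.
  rewrite row_reroute_self, col_reroute_self. destruct in_out_nonneg as [HI HO].
  unfold m. destruct (Rle_dec I O).
  - rewrite Rmax_right by auto. destruct (Req_dec O 0) as [Hz|Hz]; [left; rewrite Hz; ring|].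
    right. unfold Rdiv. rewrite Rinv_r by auto. ring.
  - rewrite Rmax_left by lra. left. unfold Rdiv. rewrite Rinv_r by lra. ring.
Qed.

End Reroute.

Fixpoint reroute_upto p M k : nat -> nat -> R :=
  match k with O => p | S k => reroute (reroute_upto p M k) M k end.

Lemma reroute_upto_spec p M k : plan Rl p M -> (k <= M)%nat ->
  plan Rl (reroute_upto p M k) M /\ (forall u, net (reroute_upto p M k) M u = net p M u) /\
  (forall u, (u < k)%nat -> row (reroute_upto p M k) M u = 0 \/ col (reroute_upto p M k) M u = 0).
Proof.
  intros Hp. induction k as [|k IH]; intros Hk; simpl; [split; [auto|split; [auto|lia]]|].
  destruct IH as [Hpl [Hnet Hsep]]; [lia|].
  split; [apply reroute_plan; auto; lia|]. split.
  - intros u. rewrite <- Hnet. unfold net. destruct (Nat.eq_dec u k) as [->|Hu].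
    + rewrite row_reroute_self, col_reroute_self by (auto; lia). unfold Rdiv. ring.
    + rewrite row_reroute, col_reroute by (auto; lia). reflexivity.
  - intros u Hu. destruct (Nat.eq_dec u k) as [->|Hne]; [apply reroute_separates; auto; lia|].
    rewrite row_reroute, col_reroute by (auto; lia). apply Hsep. lia.
Qed.

Lemma plan_separate p M : plan Rl p M ->
  exists p', plan Rl p' M /\ (forall u, net p' M u = net p M u) /\ separated p' M.
Proof.
  intros Hp. destruct (reroute_upto_spec p M M Hp (le_n M)) as [Hpl [Hnet Hsep]].
  exists (reroute_upto p M M). split; [auto|]. split; [auto|].
  intros u. destruct (Nat.lt_ge_cases u M) as [Hu|Hu]; [auto|].
  left. unfold row. rewrite <- (fsum_0 M). apply fsum_ext. intros j _. apply Hpl. auto.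
Qed.

End Rerouting.

Definition strict_incr (s : nat -> nat) : Prop := forall k, (s k < s (S k))%nat.

Lemma strict_incr_ge s : strict_incr s -> forall k, (k <= s k)%nat.
Proof. intros H k. induction k as [|k IH]; [lia|]. specialize (H k). lia. Qed.

Lemma strict_incr_lt s : strict_incr s -> forall a b, (a < b)%nat -> (s a < s b)%nat.
Proof. intros H a b Hab. induction Hab as [|b Hab IH]; [apply H|]. specialize (H b). lia. Qed.

Lemma is_lim_seq_inv_succ : is_lim_seq (fun k => / (INR k + 1)) 0.
Proof.
  replace (Finite 0) with (Rbar_inv p_infty) by reflexivity.
  apply is_lim_seq_inv; [|discriminate].
  apply (is_lim_seq_ext (fun k => INR (S k))); [intros; apply S_INR|].
  apply (is_lim_seq_incr_1 INR), is_lim_seq_INR.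
Qed.

Lemma inv_succ_pos k : 0 < / (INR k + 1).
Proof. apply Rinv_0_lt_compat. pose proof (pos_INR k). lra. Qed.

Lemma bounded_convergent_subseq (v : nat -> R) B : (forall k, Rabs (v k) <= B) ->
  exists s, strict_incr s /\ exists l : R, is_lim_seq (fun k => v (s k)) l.
Proof.
  intros HB.
  destruct (Bolzano_Weierstrass v (fun c => -B <= c <= B) (compact_P3 (-B) B)) as [l Hl].
  { intros n. apply Rabs_le_between, HB. }
  assert (Hpick : forall N k : nat, exists n, (N <= n)%nat /\ Rabs (v n - l) < / (INR k + 1)).
  { intros N k. apply (Hl (disc l (mkposreal _ (inv_succ_pos k))) N).
    exists (mkposreal _ (inv_succ_pos k)). intros y Hy. exact Hy. }
  set (pick := fun N k => proj1_sig (constructive_indefinite_description _ (Hpick N k))).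
  assert (Hpk : forall N k, (N <= pick N k)%nat /\ Rabs (v (pick N k) - l) < / (INR k + 1))
    by (intros N k; exact (proj2_sig (constructive_indefinite_description _ (Hpick N k)))).
  set (s := fix s k := match k with O => pick O O | S k' => pick (S (s k')) (S k') end).
  exists s. split.
  - intros k. simpl. destruct (Hpk (S (s k)) (S k)). lia.
  - exists l. apply (is_lim_seq_abs_sub_le _ _ _ is_lim_seq_inv_succ).
    intros k. left. destruct k; simpl; apply Hpk.
Qed.

Section Diagonal.
Variable u : nat -> nat -> R.
Variable B : nat -> R.
Hypothesis u_bounded : forall k c, Rabs (u k c) <= B c.

Lemma convergent_subseq_at (psi : nat -> nat) c :
  exists s, strict_incr s /\ exists l : R, is_lim_seq (fun k => u (psi (s k)) c) l.
Proof. apply (bounded_convergent_subseq (fun k => u (psi k) c) (B c)). auto. Qed.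

Definition refine (psi : nat -> nat) c : nat -> nat :=
  fun k => psi (proj1_sig (constructive_indefinite_description _ (convergent_subseq_at psi c)) k).

Lemma refine_spec psi c :
  (exists tau, strict_incr tau /\ forall k, refine psi c k = psi (tau k)) /\
  exists l : R, is_lim_seq (fun k => u (refine psi c k) c) l.
Proof.
  unfold refine. destruct (constructive_indefinite_description _ (convergent_subseq_at psi c))
    as [s [Hs Hl]]. simpl. eauto.
Qed.

Fixpoint nested (c : nat) : nat -> nat :=
  match c with O => refine (fun k => k) O | S c' => refine (nested c') (S c') end.

Lemma nested_conv c : exists l : R, is_lim_seq (fun k => u (nested c k) c) l.
Proof. destruct c; apply refine_spec. Qed.

Lemma nested_sub c d : exists tau, strict_incr tau /\ forall k, nested (c + d) k = nested c (tau k).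
Proof.
  induction d as [|d [tau [Ht Hk]]].
  - exists (fun k => k). split; [intros k; lia|]. intros k. now rewrite Nat.add_0_r.
  - rewrite Nat.add_succ_r. simpl.
    destruct (refine_spec (nested (c + d)) (S (c + d))) as [[tau2 [Ht2 Hk2]] _].
    exists (fun k => tau (tau2 k)). split.
    + intros k. apply strict_incr_lt; auto.
    + intros k. now rewrite Hk2, Hk.
Qed.

Lemma nested_incr c : strict_incr (nested c).
Proof.
  destruct (nested_sub 0 c) as [tau [Ht Hk]].
  destruct (refine_spec (fun k => k) O) as [[tau0 [Ht0 Hk0]] _].
  intros k. simpl in Hk. rewrite !Hk. simpl. rewrite !Hk0. apply strict_incr_lt; auto.
Qed.

Lemma diagonal_subseq :
  exists phi, strict_incr phi /\ forall c, exists l : R, is_lim_seq (fun k => u (phi k) c) l.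
Proof.
  exists (fun k => nested k k). split.
  - intros k. destruct (nested_sub k 1) as [tau [Ht Hk]]. rewrite Nat.add_1_r in Hk. rewrite Hk.
    apply strict_incr_lt; [apply nested_incr|]. pose proof (strict_incr_ge tau Ht (S k)). lia.
  - intros c. destruct (nested_conv c) as [l Hl]. exists l. apply is_lim_seq_spec. intros eps.
    apply is_lim_seq_spec in Hl. destruct (Hl eps) as [N HN]. exists (c + N)%nat. intros k Hk.
    destruct (nested_sub c (k - c)) as [tau [Ht Hkk]].
    replace (c + (k - c))%nat with k in Hkk by lia. rewrite Hkk. apply HN.
    pose proof (strict_incr_ge tau Ht k). lia.
Qed.

End Diagonal.

Lemma Rmax_0_lipschitz a b : Rabs (Rmax a 0 - Rmax b 0) <= Rabs (a - b).
Proof.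
  unfold Rmax. destruct (Rle_dec a 0), (Rle_dec b 0); apply Rabs_le;
    pose proof (Rabs_le_between (a - b) (Rabs (a - b))) as [H _]; specialize (H (Rle_refl _)); lra.
Qed.

Lemma Rmax_0_sub x : Rmax x 0 - Rmax (- x) 0 = x.
Proof. unfold Rmax. destruct (Rle_dec x 0), (Rle_dec (- x) 0); lra. Qed.

Lemma ex_series_Rmax_0 (G : nat -> R) :
  ex_series (fun i => Rabs (G i)) -> ex_series (fun i => Rmax (G i) 0).
Proof.
  apply ex_series_nonneg_le. intros i. split; [apply Rmax_r|].
  unfold Rmax. destruct (Rle_dec (G i) 0); [apply Rabs_pos|apply Rle_abs].
Qed.

Section SeparatedPlans.
Variable Rl : nat -> nat -> Prop.
Variables (p : nat -> nat -> R) (M : nat).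
Hypothesis Hp : plan Rl p M.
Hypothesis Hsep : separated p M.

Lemma row_separated u : row p M u = Rmax (net p M u) 0.
Proof.
  destruct Hp as [Hpos _].
  assert (0 <= row p M u) by (apply fsum_nonneg, Hpos).
  assert (0 <= col p M u) by (apply fsum_nonneg; intros; apply Hpos).
  unfold net, Rmax. destruct (Hsep u) as [Hz|Hz]; rewrite Hz; destruct (Rle_dec _ 0); lra.
Qed.

Lemma col_separated u : col p M u = Rmax (- net p M u) 0.
Proof.
  pose proof (Rmax_0_sub (net p M u)) as Hs. rewrite <- row_separated in Hs. unfold net in *. lra.
Qed.

Lemma entry_le_col i j : p i j <= col p M j.
Proof.
  destruct Hp as [Hpos [_ Hsupp]]. destruct (Nat.lt_ge_cases i M) as [Hi|Hi].
  - apply (fsum_term_le (fun i => p i j)); auto.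
  - rewrite Hsupp by auto. apply fsum_nonneg. auto.
Qed.

Variable G : nat -> R.
Hypothesis HG : ex_series (fun i => Rabs (G i)).
Hypothesis Hclose : ex_series (fun j => Rabs (G j - net p M j)).

Lemma row_sub_Rmax_0 i :
  Rabs (row p M i - Rmax (G i) 0) <= Series (fun j => Rabs (G j - net p M j)).
Proof.
  rewrite row_separated. eapply Rle_trans; [apply Rmax_0_lipschitz|].
  rewrite Rabs_minus_sym. apply (term_le_Series (fun j => Rabs (G j - net p M j))); auto.
  intros; apply Rabs_pos.
Qed.

(* Mass leaving [i] can only land where [G] is negative, up to the [L1] error. *)
Lemma row_tail_bound i N :
  0 <= row p M i - fsum (p i) N <=
  (Series (fun j => Rmax (- G j) 0) - fsum (fun j => Rmax (- G j) 0) N)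
  + Series (fun j => Rabs (G j - net p M j)).
Proof.
  destruct Hp as [Hpos [_ Hsupp]].
  set (L := Nat.max M N).
  assert (HL : row p M i = fsum (p i) L)
    by (symmetry; apply fsum_supp; [intros; apply Hsupp|]; lia).
  assert (Hcol : forall j, p i j <= Rmax (- G j) 0 + Rabs (G j - net p M j)).
  { intros j. eapply Rle_trans; [apply entry_le_col|]. rewrite col_separated.
    pose proof (Rmax_0_lipschitz (- net p M j) (- G j)) as Hl.
    replace (- net p M j - - G j) with (G j - net p M j) in Hl by ring.
    apply Rabs_le_between in Hl. lra. }
  assert (HGm : ex_series (fun j => Rmax (- G j) 0)).
  { apply ex_series_Rmax_0. eapply ex_series_ext; [|exact HG]. intros; now rewrite Rabs_Ropp. }
  rewrite HL. split; [pose proof (fsum_le_mono (p i) N L (Hpos i) ltac:(lia)); lra|].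
  eapply Rle_trans; [apply (fsum_incr_le _ _ N L Hcol); lia|]. rewrite !fsum_plus.
  pose proof (fsum_le_Series (fun j => Rmax (- G j) 0) L (fun j => Rmax_r _ _) HGm).
  pose proof (fsum_le_Series _ L (fun j => Rabs_pos (G j - net p M j)) Hclose).
  pose proof (fsum_nonneg (fun j => Rabs (G j - net p M j)) N (fun j => Rabs_pos _)). lra.
Qed.

End SeparatedPlans.

Lemma is_series_row_limit (Rl : nat -> nat -> Prop) (G : nat -> R) (pk : nat -> nat -> nat -> R)
  (Mk : nat -> nat) (delta : nat -> R) (p : nat -> nat -> R) :
  ex_series (fun i => Rabs (G i)) -> is_lim_seq delta 0 ->
  (forall k, plan Rl (pk k) (Mk k) /\ separated (pk k) (Mk k) /\
             L1_close G (net (pk k) (Mk k)) (delta k)) ->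
  (forall i j, is_lim_seq (fun k => pk k i j) (p i j)) ->
  forall i, is_series (p i) (Rmax (G i) 0).
Proof.
  intros HG Hdelta Hk Hlim i.
  set (Gm := fun j => Rmax (- G j) 0).
  set (dl := fun k => Series (fun j => Rabs (G j - net (pk k) (Mk k) j))).
  assert (Hdl : is_lim_seq dl 0).
  { apply (is_lim_seq_le_le (fun _ => 0) dl delta); [|apply is_lim_seq_const|exact Hdelta].
    intros k. destruct (Hk k) as (_ & _ & Hex & Hlt).
    split; [apply Series_nonneg; [intros; apply Rabs_pos|exact Hex] | left; exact Hlt]. }
  assert (Hrow : is_lim_seq (fun k => row (pk k) (Mk k) i) (Rmax (G i) 0)).
  { apply (is_lim_seq_abs_sub_le _ _ dl Hdl). intros k. destruct (Hk k) as (Hp & Hsep & Hex & _).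
    apply (row_sub_Rmax_0 Rl); auto. }
  assert (Hbound : forall N, 0 <= Rmax (G i) 0 - fsum (p i) N <= Series Gm - fsum Gm N).
  { intros N.
    assert (Hdiff : is_lim_seq (fun k => row (pk k) (Mk k) i - fsum (pk k i) N)
                               (Rmax (G i) 0 - fsum (p i) N))
      by (apply is_lim_seq_minus'; [exact Hrow | apply (is_lim_seq_fsum (fun j k => pk k i j))];
          intros; apply Hlim).
    assert (Htail : forall k, 0 <= row (pk k) (Mk k) i - fsum (pk k i) N
                              <= (Series Gm - fsum Gm N) + dl k)
      by (intros k; destruct (Hk k) as (Hp & Hsep & Hex & _); apply (row_tail_bound Rl); auto).
    split.
    - apply (is_lim_seq_ge_const _ _ _ (fun k => proj1 (Htail k)) Hdiff).
    - apply (is_lim_seq_le_R _ (fun k => (Series Gm - fsum Gm N) + dl k) _ _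
               (fun k => proj2 (Htail k)) Hdiff).
      pose proof (is_lim_seq_plus' _ _ _ _ (is_lim_seq_const (Series Gm - fsum Gm N)) Hdl) as Hs.
      rewrite Rplus_0_r in Hs. exact Hs. }
  assert (HGm : ex_series Gm).
  { apply ex_series_Rmax_0. eapply ex_series_ext; [|exact HG]. intros; now rewrite Rabs_Ropp. }
  apply is_series_fsum, (is_lim_seq_abs_sub_le _ _ (fun N => Series Gm - fsum Gm N)).
  - rewrite <- (Rminus_diag_eq (Series Gm) (Series Gm)) by reflexivity.
    apply is_lim_seq_minus'; [apply is_lim_seq_const | apply is_lim_seq_fsum_Series, HGm].
  - intros N. rewrite Rabs_minus_sym, Rabs_pos_eq; apply Hbound.
Qed.

Lemma L1_close_ext G H H' eps : (forall i, H i = H' i) -> L1_close G H eps -> L1_close G H' eps.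
Proof.
  intros Heq [Hex Hlt].
  assert (Hf : forall i, Rabs (G i - H i) = Rabs (G i - H' i)) by (intros; now rewrite Heq).
  split; [exact (ex_series_ext _ _ Hf Hex) | now rewrite <- (Series_ext _ _ Hf)].
Qed.

Lemma plan_transpose Rl p M : plan Rl p M -> plan (fun i j => Rl j i) (fun i j => p j i) M.
Proof. intros (Hpos & HRl & Hsupp). repeat split; auto. intros i j Hij. apply Hsupp. tauto. Qed.

Lemma net_transpose p M i : net (fun i j => p j i) M i = - net p M i.
Proof. unfold net, row, col. change (fsum (fun j => p i j) M) with (fsum (p i) M). ring. Qed.

Lemma separated_transpose p M : separated p M -> separated (fun i j => p j i) M.
Proof. intros Hsep u. destruct (Hsep u); [right|left]; auto. Qed.

Lemma L1_close_transpose G p M eps : L1_close G (net p M) eps ->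
  L1_close (fun i => - G i) (net (fun i j => p j i) M) eps.
Proof.
  intros [Hex Hlt].
  assert (Hf : forall i, Rabs (G i - net p M i) = Rabs (- G i - net (fun i j => p j i) M i))
    by (intros; rewrite net_transpose, <- Rabs_Ropp; f_equal; ring).
  split; [exact (ex_series_ext _ _ Hf Hex) | now rewrite <- (Series_ext _ _ Hf)].
Qed.

Lemma separated_entry_bound Rl G p M eps : plan Rl p M -> separated p M ->
  L1_close G (net p M) eps -> eps <= 1 -> forall i j, Rabs (p i j) <= Rabs (G j) + 1.
Proof.
  intros Hp Hsep [Hex Hlt] Heps i j. rewrite Rabs_pos_eq by apply Hp.
  pose proof (entry_le_col Rl p M Hp i j) as Hpc. rewrite (col_separated Rl p M Hp Hsep) in Hpc.
  assert (Hj : Rabs (G j - net p M j) <= Series (fun j => Rabs (G j - net p M j)))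
    by (apply (term_le_Series (fun j => Rabs (G j - net p M j))); auto using Rabs_pos).
  pose proof (Rabs_triang_inv (net p M j) (G j)). rewrite Rabs_minus_sym in Hj.
  unfold Rmax in Hpc. destruct (Rle_dec (- net p M j) 0); [pose proof (Rabs_pos (G j)); lra|].
  pose proof (Rle_abs (- net p M j)). rewrite Rabs_Ropp in *. lra.
Qed.

Definition transport (Rl : nat -> nat -> Prop) (G : nat -> R) (p : nat -> nat -> R) : Prop :=
  (forall i j, 0 <= p i j) /\ (forall i j, p i j <> 0 -> Rl i j) /\
  (forall i, is_series (p i) (Rmax (G i) 0)) /\
  (forall j, is_series (fun i => p i j) (Rmax (- G j) 0)).

Section Transport.
Variable Rl : nat -> nat -> Prop.
Hypothesis Rl_irrefl : forall i, ~ Rl i i.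
Hypothesis Rl_trans : forall i j k, Rl i j -> Rl j k -> Rl i k.
Variable G : nat -> R.
Hypothesis HG : ex_series (fun i => Rabs (G i)).
Hypothesis G_approx : forall eps, 0 < eps -> exists p M, plan Rl p M /\ L1_close G (net p M) eps.

Lemma separated_plan_approx k : exists pM : (nat -> nat -> R) * nat,
  plan Rl (fst pM) (snd pM) /\ separated (fst pM) (snd pM) /\
  L1_close G (net (fst pM) (snd pM)) (/ (INR k + 1)).
Proof.
  destruct (G_approx _ (inv_succ_pos k)) as [p0 [M [Hp0 Hclose]]].
  destruct (plan_separate Rl Rl_irrefl Rl_trans p0 M Hp0) as [p [Hp [Hnet Hsep]]].
  exists (p, M). simpl. split; [|split]; auto.
  apply (L1_close_ext _ (net p0 M)); auto.
Qed.

Theorem transport_of_approx : exists p, transport Rl G p.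
Proof.
  destruct (choice _ separated_plan_approx) as [pick Hk].
  set (pk := fun k => fst (pick k)). set (Mk := fun k => snd (pick k)).
  assert (Hbound : forall k i j, Rabs (pk k i j) <= Rabs (G j) + 1).
  { intros k. destruct (Hk k) as (Hp & Hsep & Hcl).
    apply (separated_entry_bound Rl G _ _ _ Hp Hsep Hcl).
    rewrite <- Rinv_1. apply Rinv_le_contravar; [lra|]. pose proof (pos_INR k). lra. }
  destruct (diagonal_subseq (fun k c => pk k (fst (of_nat c)) (snd (of_nat c)))
              (fun c => Rabs (G (snd (of_nat c))) + 1) (fun k c => Hbound _ _ _))
    as [phi [Hphi Hlim]].
  destruct (choice _ Hlim) as [lim Hlim'].
  set (p := fun i j => lim (to_nat (i, j))).
  assert (Hconv : forall i j, is_lim_seq (fun k => pk (phi k) i j) (p i j)).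
  { intros i j. pose proof (Hlim' (to_nat (i, j))) as Hl. now rewrite cancel_of_to in Hl. }
  assert (Hdelta : is_lim_seq (fun k => / (INR (phi k) + 1)) 0)
    by exact (is_lim_seq_subseq _ _ _ (eventually_subseq _ Hphi) is_lim_seq_inv_succ).
  exists p. split; [|split; [|split]].
  - intros i j. apply (is_lim_seq_ge_const (fun k => pk (phi k) i j)); [|apply Hconv].
    intros k. apply (Hk (phi k)).
  - intros i j Hne. apply NNPP. intros HnR. apply Hne.
    apply Rbar_finite_eq. rewrite <- (is_lim_seq_unique _ _ (Hconv i j)).
    apply is_lim_seq_unique, (is_lim_seq_ext (fun _ => 0)); [|apply is_lim_seq_const].
    intros k. apply NNPP. intros Hz. apply HnR. apply (Hk (phi k)). auto.
  - apply (is_series_row_limit Rl G (fun k => pk (phi k)) (fun k => Mk (phi k)) _ p HG Hdelta);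
      [intros k; apply Hk | exact Hconv].
  - intros j. apply (is_series_row_limit (fun i j => Rl j i) (fun i => - G i)
      (fun k i j => pk (phi k) j i) (fun k => Mk (phi k)) _ (fun i j => p j i)
      (ex_series_ext _ _ (fun i => eq_sym (Rabs_Ropp (G i))) HG) Hdelta); [|intros; apply Hconv].
    intros k. destruct (Hk (phi k)) as (Hp & Hsep & Hcl).
    split; [apply plan_transpose, Hp|]. split; [apply separated_transpose, Hsep|].
    apply L1_close_transpose, Hcl.
Qed.

End Transport.

Definition unpair (p : nat -> nat -> R) (n : nat) : R := p (fst (of_nat n)) (snd (of_nat n)).

Lemma is_series_unpair_row (p : nat -> nat -> R) i l : (forall i j, 0 <= p i j) ->
  is_series (p i) l -> is_series (fun n => unpair p n * ind (fst (of_nat n) = i)) l.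
Proof.
  intros Hp Hi. apply (is_series_reindex _ (fun j => to_nat (i, j))).
  - intros n. apply mul_ind_bounds, Hp.
  - intros a b Hab. apply to_nat_inj in Hab. congruence.
  - intros n Hn. rewrite ind_false; [ring|]. intros Hc. apply (Hn (snd (of_nat n))).
    rewrite <- Hc, <- surjective_pairing. apply cancel_to_of.
  - eapply is_series_ext; [|exact Hi]. intros j. unfold unpair.
    rewrite cancel_of_to, ind_true; simpl; [ring|auto].
Qed.

Lemma is_series_unpair_col (p : nat -> nat -> R) j l : (forall i j, 0 <= p i j) ->
  is_series (fun i => p i j) l -> is_series (fun n => unpair p n * ind (snd (of_nat n) = j)) l.
Proof.
  intros Hp Hj. apply (is_series_reindex _ (fun i => to_nat (i, j))).
  - intros n. apply mul_ind_bounds, Hp.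
  - intros a b Hab. apply to_nat_inj in Hab. congruence.
  - intros n Hn. rewrite ind_false; [ring|]. intros Hc. apply (Hn (fst (of_nat n))).
    rewrite <- Hc, <- surjective_pairing. apply cancel_to_of.
  - eapply is_series_ext; [|exact Hj]. intros i. unfold unpair.
    rewrite cancel_of_to, ind_true; simpl; [ring|auto].
Qed.

Lemma is_series_unpair (p : nat -> nat -> R) (r : nat -> R) : (forall i j, 0 <= p i j) ->
  (forall i, is_series (p i) (r i)) -> ex_series r -> is_series (unpair p) (Series r).
Proof.
  intros Hp Hr Hrs.
  destruct (is_series_swap (fun i n => unpair p n * ind (fst (of_nat n) = i)) r) as [_ Hsw]; auto.
  - intros i n. apply mul_ind_bounds, Hp.
  - intros i. apply is_series_unpair_row; auto.
  - eapply is_series_ext; [|exact Hsw]. intros n. simpl.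
    rewrite (is_series_unique _ (unpair p n * ind (exists i, fst (of_nat n) = i))).
    + rewrite ind_true by eauto. ring.
    + apply is_series_mult_l, (is_series_ind_unique nat (fun i => i) (fun i => fst (of_nat n) = i));
        [apply enumeration_id | congruence].
Qed.

Section Flows.
Variable V : Type.
Variable E : V -> V -> Prop.
Variable e : nat -> V.
Hypothesis He : enumeration e.

Lemma Dset_of_paths (gam : nat -> list V) (q : nat -> R) (g : V -> R) :
  (forall n, sa_path E (gam n)) -> (forall n, 0 <= q n) -> ex_series q ->
  (forall x, is_series (fun n => q n * (ind (hd x (gam n) = x) - ind (last (gam n) x = x)))
                       (g x)) ->
  Dset e E g.
Proof.
  intros Hsa Hq Hqs Hg.
  assert (HQ : forall x y, is_series (fun n => q n * Qpath (gam n) x y)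
                                     (Series (fun n => q n * Qpath (gam n) x y))).
  { intros x y. apply Series_correct, (ex_series_nonneg_le _ q); auto.
    intros n. apply mul_ind_bounds, Hq. }
  exists (fun x y => Series (fun n => q n * Qpath (gam n) x y)). split; [|split].
  - intros x y _. apply Series_nonneg; [intros; apply mul_ind_bounds, Hq | eexists; apply HQ].
  - exists gam, q. split; [|split; [|split]]; auto.
  - intros x. rewrite <- (is_series_unique _ _ (Hg x)).
    apply is_series_unique, (is_series_div V E e He gam q _ Hsa Hq Hqs (fun x y _ => HQ x y)).
Qed.

Definition reach_idx (i j : nat) : Prop := reach E (e i) (e j).

Definition idx (v : V) : nat := proj1_sig (constructive_indefinite_description _ (proj2 He v)).

Lemma e_idx v : e (idx v) = v.
Proof. exact (proj2_sig (constructive_indefinite_description _ (proj2 He v))). Qed.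

Lemma ind_eq_e v i : ind (v = e i) = ind (idx v = i).
Proof.
  apply ind_iff. split; [intros ->; apply (proj1 He), e_idx | intros <-; symmetry; apply e_idx].
Qed.

Lemma Dset_endpoint_series d : Dset e E d -> exists (q : nat -> R) (a b : nat -> nat),
  (forall n, 0 <= q n) /\ ex_series q /\ (forall n, a n <> b n -> reach_idx (a n) (b n)) /\
  (forall i, is_series (fun n => q n * (ind (a n = i) - ind (b n = i))) (d (e i))).
Proof.
  intros [Q [_ [[gam [q [Hsa [Hq [Hqs HQ]]]]] Hdiv]]].
  exists q, (fun n => idx (hd (e 0) (gam n))), (fun n => idx (last (gam n) (e 0))).
  split; [|split; [|split]]; auto.
  - intros n Hab. unfold reach_idx. rewrite !e_idx. apply sa_path_reach; auto. congruence.
  - intros i. rewrite Hdiv.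
    eapply is_series_ext; [|exact (is_series_div V E e He gam q Q Hsa Hq Hqs HQ (e i))].
    intros n. destruct (Hsa n) as [Hne _].
    now rewrite (hd_indep _ (e i) (e 0)), (last_indep _ (e i) (e 0)), !ind_eq_e by auto.
Qed.

Lemma Dset_plan_approx d : Dset e E d ->
  forall eps, 0 < eps ->
  exists p M, plan reach_idx p M /\ L1_close (fun i => d (e i)) (net p M) eps.
Proof.
  intros Hd eps Heps. destruct (Dset_endpoint_series d Hd) as (q & a & b & Hq & Hqs & HRl & Hser).
  exact (endpoint_plan_approx reach_idx q a b _ eps Hq Hqs HRl Hser Heps).
Qed.

(* The one-vertex path is only a placeholder: it is used with weight [0]. *)
Definition link (i j : nat) : list V :=
  match excluded_middle_informative (reach_idx i j) with
  | left H => e i :: proj1_sig (constructive_indefinite_description _ H) ++ [e j]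
  | right _ => [e i]
  end.

Lemma link_spec i j : dpath E (link i j) /\ link i j <> [] /\ (forall x, hd x (link i j) = e i) /\
  (reach_idx i j -> forall x, last (link i j) x = e j).
Proof.
  unfold link. destruct (excluded_middle_informative (reach_idx i j)) as [H|H].
  - destruct (constructive_indefinite_description _ H) as [l Hl]. cbn [proj1_sig hd].
    split; [exact Hl|]. split; [discriminate|]. split; [auto|].
    intros _ x. change (e i :: l ++ [e j]) with ((e i :: l) ++ [e j]). apply last_last.
  - simpl. repeat split; [discriminate|tauto].
Qed.

Lemma Dset_of_transport g p :
  acyclic E -> L1 e g -> transport reach_idx (fun i => g (e i)) p -> Dset e E g.
Proof.
  intros HE Hg (Hp0 & HpRel & Hrow & Hcol).
  set (a := fun n => fst (of_nat n)). set (b := fun n => snd (of_nat n)).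
  apply (Dset_of_paths (fun n => link (a n) (b n)) (unpair p)).
  - intros n. destruct (link_spec (a n) (b n)) as (Hd & Hne & _).
    split; [|split]; auto. apply (acyclic_dpath_NoDup E); auto.
  - intros n. apply Hp0.
  - eexists. apply is_series_unpair; [auto|exact Hrow|]. apply ex_series_Rmax_0, Hg.
  - intros x. destruct (proj2 He x) as [i <-].
    rewrite <- Rmax_0_sub.
    apply (is_series_ext (fun n => unpair p n * ind (a n = i) - unpair p n * ind (b n = i))).
    + intros n. destruct (Req_dec (unpair p n) 0) as [Hz|Hz]; [rewrite Hz; simpl; ring|].
      destruct (link_spec (a n) (b n)) as (_ & _ & Hhd & Hlast).
      rewrite Hhd, (Hlast (HpRel _ _ Hz)).
      rewrite (ind_iff (e (a n) = e i) (a n = i)), (ind_iff (e (b n) = e i) (b n = i))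
        by (split; [apply (proj1 He) | congruence]).
      simpl. ring.
    + apply is_series_sub; [apply is_series_unpair_row | apply is_series_unpair_col]; auto.
Qed.

End Flows.

Theorem lemma5p1 (V : Type) (e : nat -> V) (E : V -> V -> Prop)
  (He : enumeration e) (HE : acyclic E) (g : V -> R) (Hg : L1 e g)
  (Hcl : forall eps : R, 0 < eps ->
     exists d : V -> R, Dset e E d /\ L1 e (fun x => g x - d x) /\
                        L1norm e (fun x => g x - d x) < eps) :
  Dset e E g.
Proof.
  assert (Happrox : forall eps, 0 < eps ->
            exists p M, plan (reach_idx V E e) p M /\ L1_close (fun i => g (e i)) (net p M) eps).
  { intros eps Heps. destruct (Hcl (eps / 2) ltac:(lra)) as [d [Hd HLd]].
    destruct (Dset_plan_approx V E e He d Hd (eps / 2) ltac:(lra)) as [p [M [Hp Hdp]]].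
    exists p, M. split; [exact Hp|]. replace eps with (eps / 2 + eps / 2) by field.
    exact (L1_close_trans _ (fun i => d (e i)) _ _ _ HLd Hdp). }
  destruct (transport_of_approx (reach_idx V E e)) with (G := fun i => g (e i)) as [p Hp].
  - intros i. apply acyclic_not_reach, HE.
  - intros i j k. apply reach_trans.
  - exact Hg.
  - exact Happrox.
  - exact (Dset_of_transport V E e He g p HE Hg Hp).
Qed.
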